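(* Let $\mathcal{M}=\langle \mathcal{S},\mathcal{A},\mathcal{P},\mathcal{R},\gamma\rangle$ be a deterministic finite MDP with next-state function $\mathscr{N}$, and let $d_{\sim}$ be the unique function $\mathcal{S}\times\mathcal{S}\to\mathbb{R}$ satisfying $d_{\sim}(s,t)=\max_{a\in\mathcal{A}}\left(|\mathcal{R}(s,a)-\mathcal{R}(t,a)|+\gamma\,d_{\sim}(\mathscr{N}(s,a),\mathscr{N}(t,a))\right)$. Let $(s_n,t_n,a_n)_{n\ge1}$ be any sequence of samples drawn from a distribution $\mathcal{D}$ on $\mathcal{S}\times\mathcal{S}\times\mathcal{A}$ with full support. Let $d_0\equiv0$ and for $n\ge1$ set $d_n(s,t)=d_{n-1}(s,t)$ for $(s,t)\ne(s_n,t_n)$ and $d_n(s_n,t_n)=\max\left(d_{n-1}(s_n,t_n),\ |\mathcal{R}(s_n,a_n)-\mathcal{R}(t_n,a_n)|+\gamma\,d_{n-1}(\mathscr{N}(s_n,a_n),\mathscr{N}(t_n,a_n))\right)$. Then $d_n\le d_{\sim}$ pointwise for all $n\in\mathbb{N}$.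
   Context: A finite MDP has finite state set $\mathcal{S}$, finite action set $\mathcal{A}$, transition kernel $\mathcal{P}$, bounded reward $\mathcal{R}:\mathcal{S}\times\mathcal{A}\to\mathbb{R}$, and discount $\gamma\in[0,1)$; it is deterministic if for every $s,a$ there is a unique $\mathscr{N}(s,a)$ with $\mathcal{P}(s,a)(\mathscr{N}(s,a))=1$. *)

From HB Require Import structures.
From mathcomp Require Import all_boot all_order all_algebra.
From mathcomp Require Import reals.
Set Implicit Arguments. Unset Strict Implicit. Unset Printing Implicit Defensive.
Import Order.TTheory GRing.Theory Num.Theory.
Local Open Scope ring_scope.

Definition bisim_target {R : realType} {S A : finType}
  (Rw : S -> A -> R) (N : S -> A -> S) (gamma : R) (d : S -> S -> R)
  (s t : S) (a : A) : R :=
  `|Rw s a - Rw t a| + gamma * d (N s a) (N t a).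

(* d is a fixed point: d(s,t) = max_{a in A} bisim_target ... (the max over the
   finite action set, written out: attained by some a and an upper bound). *)
Definition is_bisim_fixpoint {R : realType} {S A : finType}
  (Rw : S -> A -> R) (N : S -> A -> S) (gamma : R) (d : S -> S -> R) : Prop :=
  forall s t : S,
    (exists a : A, d s t = bisim_target Rw N gamma d s t a) /\
    (forall a : A, bisim_target Rw N gamma d s t a <= d s t).

Fixpoint sampled_iter {R : realType} {S A : finType}
  (Rw : S -> A -> R) (N : S -> A -> S) (gamma : R)
  (samp : nat -> S * S * A) (n : nat) : S -> S -> R :=
  match n with
  | 0 => fun _ _ => 0
  | n'.+1 =>
      let dp := sampled_iter Rw N gamma samp n' in
      let '(sn, tn, an) := samp n in
      fun s t =>
        if (s == sn) && (t == tn)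
        then Num.max (dp sn tn) (bisim_target Rw N gamma dp sn tn an)
        else dp s t
  end.

From HB Require Import structures.
From mathcomp Require Import all_boot all_order all_algebra.
From mathcomp Require Import reals.
Set Implicit Arguments. Unset Strict Implicit. Unset Printing Implicit Defensive.
Import Order.TTheory GRing.Theory Num.Theory.
Local Open Scope ring_scope.

(* Every sampled update replaces a value by the maximum of itself and a
   one-step backup of the current iterate; both stay below any nonnegative d
   with [bisim_target d <= d], because the backup is monotone in d.  So
   induction on n gives the bound, starting from d_0 = 0 <= d~.  Nonnegativity
   of d~ holds at a minimising pair (m1, m2), since d~(m1, m2) >= gamma
   d~(m1, m2) and gamma < 1. *)

Section BisimBounds.

Variables (R : realType) (S A : finType).
Variables (Rw : S -> A -> R) (N : S -> A -> S) (gamma : R).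
Hypothesis gamma_ge0 : 0 <= gamma.

Lemma bisim_target_le (d1 d2 : S -> S -> R) (s t : S) (a : A) :
  (forall u v, d1 u v <= d2 u v) ->
  bisim_target Rw N gamma d1 s t a <= bisim_target Rw N gamma d2 s t a.
Proof. by move=> le_d12; rewrite /bisim_target lerD2l ler_wpM2l. Qed.

Lemma bisim_supersolution_ge0 (d : S -> S -> R) (a : A) :
  gamma < 1 ->
  (forall s t, bisim_target Rw N gamma d s t a <= d s t) ->
  forall s t, 0 <= d s t.
Proof.
move=> gamma_lt1 d_super s t.
have [[m1 m2] _ d_min] :=
  @arg_minP _ R _ (s, t) predT (fun p : S * S => d p.1 p.2) isT.
have {}d_min u v : d m1 m2 <= d u v by exact: (d_min (u, v)).
suff dm_ge0 : 0 <= d m1 m2 by exact: le_trans dm_ge0 (d_min s t).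
have : gamma * d m1 m2 <= d m1 m2.
  apply: le_trans (d_super m1 m2); rewrite /bisim_target.
  by rewrite -[X in X <= _]add0r lerD ?ler_wpM2l.
by rewrite -subr_ge0 -{1}[d m1 m2]mul1r -mulrBl pmulr_rge0 // subr_gt0.
Qed.

Lemma sampled_iter_le (d : S -> S -> R) (samp : nat -> S * S * A) :
  (forall s t, 0 <= d s t) ->
  (forall s t a, bisim_target Rw N gamma d s t a <= d s t) ->
  forall n s t, sampled_iter Rw N gamma samp n s t <= d s t.
Proof.
move=> d_ge0 d_super; elim=> [|n IHn] s t //=.
case: (samp n.+1) => [[sn tn] an].
case: ifP => [/andP[/eqP-> /eqP->]|_]; last exact: IHn.
rewrite ge_max IHn /=.
by apply: le_trans (d_super sn tn an); apply: bisim_target_le.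
Qed.

End BisimBounds.

Theorem lemma3 (R : realType) (S A : finType)
  (Rw : S -> A -> R) (N : S -> A -> S) (gamma : R)
  (hg0 : 0 <= gamma) (hg1 : gamma < 1)
  (dsim : S -> S -> R) (hdsim : is_bisim_fixpoint Rw N gamma dsim)
  (D : S * S * A -> R) (hDpos : forall x, 0 < D x)
  (hDsum : \sum_(x : S * S * A) D x = 1)
  (samp : nat -> S * S * A) :
  forall (n : nat) (s t : S), sampled_iter Rw N gamma samp n s t <= dsim s t.
Proof.
have dsim_super s t a : bisim_target Rw N gamma dsim s t a <= dsim s t.
  by have [_] := hdsim s t; apply.
have dsim_ge0 s t : 0 <= dsim s t.
  have [[a _] _] := hdsim s t.
  exact: (bisim_supersolution_ge0 hg0 hg1 (fun u v => dsim_super u v a)).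
exact: (sampled_iter_le hg0 samp dsim_ge0 dsim_super).
Qed.
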